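(* Let $f(\pi)=\pi f_1(0,\pi)+(1-\pi)f_0(0,\pi)$ and suppose $|f'(\pi)|\le L_{UN}$ for all $\pi\in[0,1]$ with some $L_{UN}<1$ (so the unconstrained policy reaches equality). Suppose $\pi_0(1|A)\ge\pi_0(1|B)$ and $g_Au(1)+(1-g_A)u(0)\le0$, and work in continuous time. Then: (i) $\max_{\pi\in[0,1]}|f_1(0,\pi)-f_0(0,\pi)|<1$, and the AA1 policy applied at all times reaches equality in continuous time; (ii) letting $\pi_t^{UN}(1|\cdot)$ and $\pi_t^{AA1}(1|\cdot)$ be the continuous-time trajectories from the same initial profiles under UN and under AA1 respectively, and $U_t(UN)$, $U_t(AA1)$ the institutional utilities of the respective policies evaluated on the respective profiles at time $t$, we have $U_t(UN)\ge U_t(AA1)$ for all $t\ge0$.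
   Context: Two groups $A,B$ with population fractions $g_A\in[0,1]$, $g_B=1-g_A$; $\neg j$ is the other group. Group $j$ has qualification profile $\pi_t(1|j)\in[0,1]$, $\pi_t(0|j)=1-\pi_t(1|j)$. A policy assigns $\tau(v;j)\in[0,1]$; utilities $u(0)\le0\le u(1)$; institutional utility $U_t(\tau)=\sum_jg_j\sum_vu(v)\tau(v;j)\pi_t(v|j)$. Selection rates $\beta_t(v;j)=\tau(v;j)\pi_t(v|j)$. Dynamics: continuously differentiable $f_0,f_1:[0,1]^2\to[0,1]$; continuous time $\frac{d}{dt}\pi_t(1|j)=\pi_t(1|j)(f_1(\beta_t(0;j),\beta_t(1;j))-1)+(1-\pi_t(1|j))f_0(\beta_t(0;j),\beta_t(1;j))$, policy determined by current profiles. UN: $\tau(1;j)=1,\tau(0;j)=0$, so each group follows $\dot\pi=f(\pi)-\pi$. Group $j$ is advantaged at $t$ if $\pi_t(1|j)\ge\pi_t(1|\neg j)$. AA1 w.r.t. advantaged $j$: $\tau(1;j)=\pi_t(1|\neg j)/\pi_t(1|j)$, $\tau(0;j)=0$, $\tau(1;\neg j)=1$, $\tau(0;\neg j)=0$ (selection rates $\beta_t(0;\cdot)=0$, $\beta_t(1;\cdot)=\pi_t(1|\neg j)$ for both groups); this is the utility-maximizing policy under the constraint of equal total selection rates when $g_ju(1)+(1-g_j)u(0)\le0$. Applied at all times w.r.t. the currently advantaged group. Reaching equality: $|\pi_t(1|A)-\pi_t(1|B)|\to0$ as $t\to\infty$. *)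

From Stdlib Require Import Reals Lra.
Open Scope R_scope.

Inductive grp := GA | GB.
Definition other (j : grp) : grp := match j with GA => GB | GB => GA end.

(* A qualification profile: [p j] = pi(1|j); pi(0|j) = 1 - pi(1|j). *)
Definition profile := grp -> R.
Definition pi (p : profile) (v : bool) (j : grp) : R :=
  if v then p j else 1 - p j.

(* A policy: [tau v j] = tau(v; j), v = true meaning qualified (v = 1). *)
Definition policy := bool -> grp -> R.

Definition gfrac (gA : R) (j : grp) : R := match j with GA => gA | GB => 1 - gA end.

Definition util (u0 u1 : R) (v : bool) : R := if v then u1 else u0.

Definition inst_util (gA u0 u1 : R) (tau : policy) (p : profile) : R :=
  gfrac gA GA * (util u0 u1 false * tau false GA * pi p false GA
                 + util u0 u1 true * tau true GA * pi p true GA)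
  + gfrac gA GB * (util u0 u1 false * tau false GB * pi p false GB
                   + util u0 u1 true * tau true GB * pi p true GB).

Definition sel (tau : policy) (p : profile) (v : bool) (j : grp) : R :=
  tau v j * pi p v j.

Definition dyn (f0 f1 : R -> R -> R) (tau : policy) (p : profile) (j : grp) : R :=
  p j * (f1 (sel tau p false j) (sel tau p true j) - 1)
  + (1 - p j) * f0 (sel tau p false j) (sel tau p true j).

Definition UN : policy := fun v _ => if v then 1 else 0.

(* Currently advantaged group (A on ties; at ties both AA1 policies induce
   the same selection rates, dynamics and utility). *)
Definition advantaged (p : profile) : grp :=
  if Rle_dec (p GB) (p GA) then GA else GB.

Definition grp_eqb (j k : grp) : bool :=
  match j, k with GA, GA | GB, GB => true | _, _ => false end.

Definition AA1_wrt (j : grp) (p : profile) : policy :=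
  fun v k => if v then (if grp_eqb k j then p (other j) / p j else 1) else 0.

Definition AA1 (p : profile) : policy := AA1_wrt (advantaged p) p.

Definition cont2 (g : R -> R -> R) : Prop :=
  forall x y eps, 0 < eps -> exists del, 0 < del /\
    forall x' y', Rabs (x' - x) < del -> Rabs (y' - y) < del ->
      Rabs (g x' y' - g x y) < eps.

Definition C1_2 (h : R -> R -> R) : Prop :=
  exists d1 d2 : R -> R -> R,
    (forall x y, derivable_pt_lim (fun s => h s y) x (d1 x y)) /\
    (forall x y, derivable_pt_lim (fun s => h x s) y (d2 x y)) /\
    cont2 d1 /\ cont2 d2.

Definition is_traj (f0 f1 : R -> R -> R) (P : profile -> policy)
    (x : R -> profile) : Prop :=
  (forall t j, 0 <= t -> 0 <= x t j <= 1) /\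
  (forall t j, 0 < t ->
     derivable_pt_lim (fun s => x s j) t (dyn f0 f1 (P (x t)) (x t) j)) /\
  (forall j eps, 0 < eps -> exists del, 0 < del /\
     forall t, 0 <= t < del -> Rabs (x t j - x 0 j) < eps).

Definition reaches_equality (x : R -> profile) : Prop :=
  forall eps, 0 < eps -> exists T, forall t, T <= t ->
    Rabs (x t GA - x t GB) < eps.

From Stdlib Require Import Reals Lra.
Open Scope R_scope.

(* Write f(q) = q f1(0,q) + (1 - q) f0(0,q).
   (i) Where |f1(0,q) - f0(0,q)| = 1, one of f0(0,.), f1(0,.) is maximal and
   the other minimal on [0,1], which forces |f'(q)| >= 1; by compactness the
   maximum is therefore < 1.  Under AA1 both groups are selected at the rate
   m = min pi(1|.), so the gap D = pi(1|A) - pi(1|B) obeys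
   D' = (f1(0,m) - f0(0,m) - 1) D and decays exponentially.
   (ii) As f' < 1, q |-> f(q) - q is nonincreasing; hence while pi^UN(1|j) lies
   below both AA1 profiles it grows at least as fast as each of them, and a
   comparison argument keeps it above their minimum.  Neither policy selects
   unqualified individuals. *)

Lemma derive_nonpos_of_right_le h q c r :
  0 < r -> derivable_pt_lim h q c ->
  (forall e, 0 < e < r -> h (q + e) <= h q) -> c <= 0.
Proof.
  intros Hr Hd Hle. destruct (Rle_lt_dec c 0) as [|Hc]; [assumption|exfalso].
  destruct (Hd (c / 2)) as [d Hd']; [lra|].
  pose proof (cond_pos d) as Hd0.
  set (e := Rmin (d / 2) (r / 2)).
  assert (He : 0 < e) by (apply Rmin_glb_lt; lra).
  assert (Hed : e <= d / 2) by apply Rmin_l.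
  assert (Her : e <= r / 2) by apply Rmin_r.
  assert (Hquot : (h (q + e) - h q) / e <= 0).
  { assert (0 < / e) by (apply Rinv_0_lt_compat; lra).
    pose proof (Hle e ltac:(lra)). unfold Rdiv. nra. }
  specialize (Hd' e ltac:(lra) ltac:(rewrite Rabs_pos_eq; lra)).
  apply Rabs_def2 in Hd'. lra.
Qed.

Lemma derive_nonneg_of_left_le h q c r :
  0 < r -> derivable_pt_lim h q c ->
  (forall e, 0 < e < r -> h (q - e) <= h q) -> 0 <= c.
Proof.
  intros Hr Hd Hle.
  assert (Hrefl : derivable_pt_lim (fun s => h (- s)) (- q) (c * -1)).
  { apply (derivable_pt_lim_comp Ropp h).
    - apply (derivable_pt_lim_opp id), derivable_pt_lim_id.
    - rewrite Ropp_involutive. exact Hd. }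
  enough (c * -1 <= 0) by lra.
  apply (derive_nonpos_of_right_le _ (- q) _ r Hr Hrefl).
  intros e He. rewrite !Ropp_involutive.
  replace (- (- q + e)) with (q - e) by ring. apply Hle; lra.
Qed.

Lemma derive_at_max_on h a b q c :
  a <= q <= b -> derivable_pt_lim h q c ->
  (forall s, a <= s <= b -> h s <= h q) -> 0 <= (q - a) * c /\ (b - q) * c <= 0.
Proof.
  intros Hq Hd Hmax. split.
  - destruct (Req_dec q a) as [->|Hqa]; [lra|].
    enough (0 <= c) by nra.
    apply (derive_nonneg_of_left_le h q c (q - a)); [lra|exact Hd|].
    intros e He. apply Hmax; lra.
  - destruct (Req_dec q b) as [->|Hqb]; [lra|].
    enough (c <= 0) by nra.
    apply (derive_nonpos_of_right_le h q c (b - q)); [lra|exact Hd|].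
    intros e He. apply Hmax; lra.
Qed.

Lemma derive_at_min_on h a b q c :
  a <= q <= b -> derivable_pt_lim h q c ->
  (forall s, a <= s <= b -> h q <= h s) -> (q - a) * c <= 0 /\ 0 <= (b - q) * c.
Proof.
  intros Hq Hd Hmin.
  destruct (derive_at_max_on (- h)%F a b q (- c) Hq) as [Hl Hr].
  - now apply derivable_pt_lim_opp.
  - intros s Hs. unfold opp_fct. pose proof (Hmin s Hs). lra.
  - lra.
Qed.

Lemma derive_le_bound f f' k s t : s <= t ->
  (forall c, s <= c <= t -> derivable_pt_lim f c (f' c) /\ f' c <= k) ->
  f t - f s <= k * (t - s).
Proof.
  intros [Hst| ->] Hd; [|lra].
  destruct (MVT_cor2 f f' s t Hst) as [c [Heq Hc]]; [intros; apply Hd; lra|].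
  rewrite Heq. destruct (Hd c ltac:(lra)). nra.
Qed.

Lemma exp_decay V V' k :
  (forall t, 0 < t -> derivable_pt_lim V t (V' t)) ->
  (forall t, 0 < t -> V' t <= - k * V t) ->
  forall s t, 0 < s <= t -> V t <= V s * exp (- k * (t - s)).
Proof.
  intros Hd Hsign s t Hst.
  set (W := fun t => V t * exp (k * t)).
  assert (HW : W t - W s <= 0 * (t - s)).
  { apply (derive_le_bound W (fun t => (V' t + k * V t) * exp (k * t))); [lra|].
    intros c Hc. split.
    - assert (Hexp : derivable_pt_lim (fun t => exp (k * t)) c (exp (k * c) * (k * 1))).
      { apply (derivable_pt_lim_comp (mult_real_fct k id) exp).
        - apply derivable_pt_lim_scal, derivable_pt_lim_id.
        - apply derivable_pt_lim_exp. }
      replace ((V' c + k * V c) * exp (k * c))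
        with (V' c * exp (k * c) + V c * (exp (k * c) * (k * 1))) by ring.
      apply (derivable_pt_lim_mult V (fun t => exp (k * t))); [apply Hd; lra | exact Hexp].
    - pose proof (Hsign c ltac:(lra)). pose proof (exp_pos (k * c)). nra. }
  unfold W in HW.
  replace (V s * exp (- k * (t - s))) with (V s * exp (k * s) * exp (- (k * t)))
    by (rewrite Rmult_assoc, <- exp_plus; f_equal; f_equal; ring).
  replace (V t) with (V t * exp (k * t) * exp (- (k * t)))
    by (rewrite Rmult_assoc, <- exp_plus, Rplus_opp_r, exp_0; ring).
  pose proof (exp_pos (- (k * t))). nra.
Qed.

Lemma exp_neg_eventually_lt k e : 0 < k -> 0 < e ->
  exists T, forall t, T <= t -> exp (- k * t) < e.
Proof.
  intros Hk He. exists (/ (k * e)). intros t Ht.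
  assert (Hke : 0 < / (k * e)) by (apply Rinv_0_lt_compat; nra).
  assert (Hkt : / e <= k * t).
  { replace (/ e) with (k * / (k * e)) by (field; lra). apply Rmult_le_compat_l; lra. }
  assert (Hgrow : / e < exp (k * t)).
  { pose proof (exp_ineq1 (k * t) ltac:(nra)). pose proof (Rinv_0_lt_compat e He). lra. }
  replace (- k * t) with (- (k * t)) by ring. rewrite exp_Ropp.
  replace e with (/ / e) by (field; lra).
  apply Rinv_lt_contravar; [|exact Hgrow].
  apply Rmult_lt_0_compat; [apply Rinv_0_lt_compat; exact He | apply exp_pos].
Qed.

Definition pos_sqr (z : R) : R := Rmax 0 z * Rmax 0 z.

Lemma pos_sqr_nonneg z : 0 <= pos_sqr z.
Proof. unfold pos_sqr, Rmax; destruct (Rle_dec 0 z); nra. Qed.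

Lemma pos_sqr_of_nonpos z : z <= 0 -> pos_sqr z = 0.
Proof. intros Hz. unfold pos_sqr. rewrite Rmax_left by exact Hz. ring. Qed.

Lemma pos_sqr_eq0 z : pos_sqr z = 0 -> z <= 0.
Proof. unfold pos_sqr, Rmax; destruct (Rle_dec 0 z); nra. Qed.

Lemma derivable_pt_lim_pos_sqr z : derivable_pt_lim pos_sqr z (2 * Rmax 0 z).
Proof.
  intros eps Heps. exists (mkposreal eps Heps). intros h Hh0 Hh. simpl in Hh.
  assert (Hquad : Rabs (pos_sqr (z + h) - pos_sqr z - 2 * Rmax 0 z * h) <= h * h).
  { unfold pos_sqr, Rmax; destruct (Rle_dec 0 (z + h)); destruct (Rle_dec 0 z);
      apply Rabs_le; split; nra. }
  assert (Hh1 : 0 < Rabs h) by (apply Rabs_pos_lt; exact Hh0).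
  replace ((pos_sqr (z + h) - pos_sqr z) / h - 2 * Rmax 0 z)
    with ((pos_sqr (z + h) - pos_sqr z - 2 * Rmax 0 z * h) / h) by (field; exact Hh0).
  unfold Rdiv. rewrite Rabs_mult, Rabs_inv.
  apply Rle_lt_trans with (h * h * / Rabs h).
  - apply Rmult_le_compat_r; [left; apply Rinv_0_lt_compat|]; assumption.
  - replace (h * h) with (Rabs h * Rabs h)
      by (rewrite <- Rabs_mult; apply Rabs_pos_eq; nra).
    field_simplify; lra.
Qed.

Lemma deriv_pos_sqr_mul_nonpos u v u' v' :
  (0 < u -> 0 < v -> u' <= 0 /\ v' <= 0) ->
  2 * Rmax 0 u * u' * pos_sqr v + pos_sqr u * (2 * Rmax 0 v * v') <= 0.
Proof.
  intros Hsign.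
  destruct (Rle_lt_dec u 0) as [Hu|Hu].
  { rewrite (Rmax_left 0 u), (pos_sqr_of_nonpos u) by lra. lra. }
  destruct (Rle_lt_dec v 0) as [Hv|Hv].
  { rewrite (Rmax_left 0 v), (pos_sqr_of_nonpos v) by lra. lra. }
  destruct (Hsign Hu Hv) as [Hu' Hv'].
  rewrite !Rmax_right by lra.
  pose proof (pos_sqr_nonneg u). pose proof (pos_sqr_nonneg v).
  assert (0 <= 2 * u * pos_sqr v) by (apply Rmult_le_pos; lra).
  assert (0 <= pos_sqr u * (2 * v)) by (apply Rmult_le_pos; lra).
  nra.
Qed.

Definition right_continuous0 (x : R -> R) : Prop :=
  forall eps, 0 < eps -> exists del, 0 < del /\
    forall t, 0 <= t < del -> Rabs (x t - x 0) < eps.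

(* Extending [x] by [x 0] on the negative half-line turns right continuity
   into the two-sided continuity the library works with. *)
Lemma continuity_pt_clamp0 x :
  right_continuous0 x -> continuity_pt (fun t => x (Rmax 0 t)) 0.
Proof.
  intros Hx eps Heps. destruct (Hx eps Heps) as [del [Hdel Hclose]].
  exists del. split; [exact Hdel|]. intros t [_ Ht]. simpl in *. unfold Rdist in *.
  rewrite Rminus_0_r in Ht. rewrite (Rmax_left 0 0) by lra.
  unfold Rmax. destruct (Rle_dec 0 t) as [Hle|].
  - apply Hclose. apply Rabs_def2 in Ht. lra.
  - rewrite Rminus_diag, Rabs_R0. exact Heps.
Qed.

Lemma continuity_pt_clamp0_pos_sqr_sub x y :
  right_continuous0 x -> right_continuous0 y ->
  continuity_pt (fun t => pos_sqr (x (Rmax 0 t) - y (Rmax 0 t))) 0.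
Proof.
  intros Hx Hy.
  apply (continuity_pt_comp (fun t => x (Rmax 0 t) - y (Rmax 0 t)) pos_sqr).
  - apply (continuity_pt_minus (fun t => x (Rmax 0 t)) (fun t => y (Rmax 0 t)));
      now apply continuity_pt_clamp0.
  - apply derivable_continuous_pt. eexists. apply derivable_pt_lim_pos_sqr.
Qed.

Lemma le_at0_of_nonincreasing V :
  (forall s t, 0 < s <= t -> V t <= V s) ->
  continuity_pt (fun t => V (Rmax 0 t)) 0 ->
  forall t, 0 <= t -> V t <= V 0.
Proof.
  intros Hmono Hcont t [Ht| <-]; [|lra].
  destruct (Rle_lt_dec (V t) (V 0)) as [|Hgt]; [assumption|exfalso].
  destruct (Hcont (V t - V 0)) as [alp [Halp Hclose]]; [lra|].
  set (s := Rmin t (alp / 2)).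
  assert (Hs : 0 < s) by (apply Rmin_glb_lt; lra).
  assert (Hst : s <= t) by apply Rmin_l.
  assert (Hsa : s <= alp / 2) by apply Rmin_r.
  specialize (Hclose s). simpl in Hclose. unfold Rdist in Hclose.
  rewrite (Rmax_right 0 s), (Rmax_left 0 0) in Hclose by lra.
  assert (Hnear : Rabs (V s - V 0) < V t - V 0).
  { apply Hclose. split; [split; [exact I|lra]|]. rewrite Rminus_0_r, Rabs_pos_eq; lra. }
  pose proof (Hmono s t (conj Hs Hst)). apply Rabs_def2 in Hnear. lra.
Qed.

(* Lyapunov function: (a - y)_+^2 (b - y)_+^2, which vanishes at 0. *)
Lemma Rmin_le_of_comparison (a b y a' b' y' : R -> R) :
  (forall t, 0 < t -> derivable_pt_lim a t (a' t)) ->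
  (forall t, 0 < t -> derivable_pt_lim b t (b' t)) ->
  (forall t, 0 < t -> derivable_pt_lim y t (y' t)) ->
  (forall t, 0 < t -> y t < a t -> y t < b t -> a' t <= y' t /\ b' t <= y' t) ->
  right_continuous0 a -> right_continuous0 b -> right_continuous0 y ->
  Rmin (a 0) (b 0) <= y 0 ->
  forall t, 0 <= t -> Rmin (a t) (b t) <= y t.
Proof.
  intros Ha Hb Hy Hcmp Hca Hcb Hcy H0 t Ht.
  set (psi := fun t => pos_sqr (a t - y t) * pos_sqr (b t - y t)).
  set (psi' := fun t => 2 * Rmax 0 (a t - y t) * (a' t - y' t) * pos_sqr (b t - y t)
                      + pos_sqr (a t - y t) * (2 * Rmax 0 (b t - y t) * (b' t - y' t))).
  assert (Hpsi_deriv : forall t, 0 < t -> derivable_pt_lim psi t (psi' t)).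
  { intros s Hs.
    assert (Hda := derivable_pt_lim_comp _ _ _ _ _
      (derivable_pt_lim_minus _ _ _ _ _ (Ha s Hs) (Hy s Hs)) (derivable_pt_lim_pos_sqr _)).
    assert (Hdb := derivable_pt_lim_comp _ _ _ _ _
      (derivable_pt_lim_minus _ _ _ _ _ (Hb s Hs) (Hy s Hs)) (derivable_pt_lim_pos_sqr _)).
    exact (derivable_pt_lim_mult _ _ _ _ _ Hda Hdb). }
  assert (Hpsi'_nonpos : forall t, 0 < t -> psi' t <= 0).
  { intros s Hs. apply deriv_pos_sqr_mul_nonpos.
    intros Hay Hby. destruct (Hcmp s Hs) as [Hay' Hby']; lra. }
  assert (Hmono : forall s u, 0 < s <= u -> psi u <= psi s).
  { intros s u Hsu.
    enough (psi u - psi s <= 0 * (u - s)) by lra.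
    apply (derive_le_bound psi psi'); [lra|].
    intros c Hc. split; [apply Hpsi_deriv | apply Hpsi'_nonpos]; lra. }
  assert (Hcont : continuity_pt (fun t => psi (Rmax 0 t)) 0)
    by exact (continuity_pt_mult _ _ 0
                (continuity_pt_clamp0_pos_sqr_sub a y Hca Hcy)
                (continuity_pt_clamp0_pos_sqr_sub b y Hcb Hcy)).
  assert (Hpsi0 : psi 0 = 0).
  { unfold psi, Rmin in *. destruct (Rle_dec (a 0) (b 0)).
    - rewrite (pos_sqr_of_nonpos (a 0 - y 0)) by lra. ring.
    - rewrite (pos_sqr_of_nonpos (b 0 - y 0)) by lra. ring. }
  assert (Hpsi_t : psi t = 0).
  { pose proof (le_at0_of_nonincreasing psi Hmono Hcont t Ht).
    pose proof (pos_sqr_nonneg (a t - y t)). pose proof (pos_sqr_nonneg (b t - y t)).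
    unfold psi in *. nra. }
  apply Rmult_integral in Hpsi_t as [Hz|Hz]; apply pos_sqr_eq0 in Hz.
  - apply Rle_trans with (a t); [apply Rmin_l | lra].
  - apply Rle_trans with (b t); [apply Rmin_r | lra].
Qed.

Lemma derivable_pt_lim_mixture g0 g1 d0 d1 q :
  derivable_pt_lim g0 q d0 -> derivable_pt_lim g1 q d1 ->
  derivable_pt_lim (fun s => s * g1 s + (1 - s) * g0 s) q
    (g1 q - g0 q + q * d1 + (1 - q) * d0).
Proof.
  intros Hd0 Hd1.
  assert (Hcompl := derivable_pt_lim_minus _ _ _ _ _
    (derivable_pt_lim_const 1 q) (derivable_pt_lim_id q)).
  assert (Hsum := derivable_pt_lim_plus _ _ _ _ _
    (derivable_pt_lim_mult _ _ _ _ _ (derivable_pt_lim_id q) Hd1)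
    (derivable_pt_lim_mult _ _ _ _ _ Hcompl Hd0)).
  unfold plus_fct, mult_fct, minus_fct, fct_cte, id in Hsum.
  replace (g1 q - g0 q + q * d1 + (1 - q) * d0)
    with (1 * g1 q + q * d1 + ((0 - 1) * g0 q + (1 - q) * d0)) by ring.
  exact Hsum.
Qed.

Definition drift (g0 g1 : R -> R) (x m : R) : R := x * (g1 m - 1) + (1 - x) * g0 m.

Section Mixture.

Variables g0 g1 d0 d1 : R -> R.
Hypothesis Hd0 : forall q, derivable_pt_lim g0 q (d0 q).
Hypothesis Hd1 : forall q, derivable_pt_lim g1 q (d1 q).
Hypothesis Hg0 : forall q, 0 <= q <= 1 -> 0 <= g0 q <= 1.
Hypothesis Hg1 : forall q, 0 <= q <= 1 -> 0 <= g1 q <= 1.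
Variable L : R.
Hypothesis HL : L < 1.
Hypothesis HF : forall q, 0 <= q <= 1 ->
  exists l, derivable_pt_lim (fun s => s * g1 s + (1 - s) * g0 s) q l /\ Rabs l <= L.

Lemma mixture_deriv_bound q : 0 <= q <= 1 ->
  Rabs (g1 q - g0 q + q * d1 q + (1 - q) * d0 q) <= L.
Proof.
  intros Hq. destruct (HF q Hq) as [l [Hl Hbound]].
  now rewrite (uniqueness_limite _ _ _ _ (derivable_pt_lim_mixture _ _ _ _ _ (Hd0 q) (Hd1 q)) Hl).
Qed.

Lemma abs_sub_lt1 q : 0 <= q <= 1 -> Rabs (g1 q - g0 q) < 1.
Proof.
  intros Hq. pose proof (mixture_deriv_bound q Hq) as Hbound.
  destruct (Hg0 q Hq), (Hg1 q Hq).
  destruct (Rlt_le_dec (Rabs (g1 q - g0 q)) 1) as [|Hge]; [assumption|exfalso].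
  destruct (Rcase_abs (g1 q - g0 q)) as [Hneg|Hpos].
  - rewrite Rabs_left in Hge by exact Hneg.
    destruct (derive_at_min_on g1 0 1 q (d1 q) Hq (Hd1 q)) as [Hl _].
    { intros s Hs. destruct (Hg1 s Hs). lra. }
    destruct (derive_at_max_on g0 0 1 q (d0 q) Hq (Hd0 q)) as [_ Hr].
    { intros s Hs. destruct (Hg0 s Hs). lra. }
    pose proof (Rle_abs (- (g1 q - g0 q + q * d1 q + (1 - q) * d0 q))).
    rewrite Rabs_Ropp in *. lra.
  - rewrite Rabs_right in Hge by exact Hpos.
    destruct (derive_at_max_on g1 0 1 q (d1 q) Hq (Hd1 q)) as [Hl _].
    { intros s Hs. destruct (Hg1 s Hs). lra. }
    destruct (derive_at_min_on g0 0 1 q (d0 q) Hq (Hd0 q)) as [_ Hr].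
    { intros s Hs. destruct (Hg0 s Hs). lra. }
    pose proof (Rle_abs (g1 q - g0 q + q * d1 q + (1 - q) * d0 q)). lra.
Qed.

Lemma max_abs_sub_lt1 : exists qm, 0 <= qm <= 1 /\
  (forall q, 0 <= q <= 1 -> Rabs (g1 q - g0 q) <= Rabs (g1 qm - g0 qm)) /\
  Rabs (g1 qm - g0 qm) < 1.
Proof.
  destruct (continuity_ab_maj (fun q => Rabs (g1 q - g0 q)) 0 1) as [qm [Hmax Hqm]].
  - lra.
  - intros q _.
    apply (continuity_pt_comp (fun q => g1 q - g0 q) Rabs); [|apply Rcontinuity_abs].
    apply continuity_pt_minus; apply derivable_continuous_pt; eexists; [apply Hd1 | apply Hd0].
  - exists qm. repeat split; try apply Hqm; [exact Hmax | exact (abs_sub_lt1 qm Hqm)].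
Qed.

(* On the diagonal the drift is [f q - q]. *)
Lemma drift_diag_antitone y m : 0 <= y <= m -> m <= 1 -> drift g0 g1 m m <= drift g0 g1 y y.
Proof.
  intros Hy Hm.
  assert (Hlip : (m * g1 m + (1 - m) * g0 m) - (y * g1 y + (1 - y) * g0 y) <= 1 * (m - y)).
  { apply (derive_le_bound (fun s => s * g1 s + (1 - s) * g0 s) (fun q => g1 q - g0 q + q * d1 q + (1 - q) * d0 q)); [lra|].
    intros c Hc. split; [now apply derivable_pt_lim_mixture|].
    pose proof (mixture_deriv_bound c ltac:(lra)).
    pose proof (Rle_abs (g1 c - g0 c + c * d1 c + (1 - c) * d0 c)). lra. }
  unfold drift. lra.
Qed.

Lemma drift_le_diag x y m : 0 <= y <= m -> m <= x <= 1 -> drift g0 g1 x m <= drift g0 g1 y y.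
Proof.
  intros Hy Hx. destruct (Hg0 m ltac:(lra)), (Hg1 m ltac:(lra)).
  pose proof (drift_diag_antitone y m Hy ltac:(lra)).
  enough (drift g0 g1 x m <= drift g0 g1 m m) by lra.
  unfold drift. nra.
Qed.

End Mixture.

Lemma sel_AA1_qualified p j : (forall k, 0 <= p k) ->
  sel (AA1 p) p true j = Rmin (p GA) (p GB).
Proof.
  intros Hp. unfold sel, AA1, AA1_wrt, advantaged, pi.
  pose proof (Hp GA) as HA. pose proof (Hp GB) as HB.
  destruct (Rle_dec (p GB) (p GA)) as [Hle|Hlt]; destruct j; simpl.
  - destruct (Req_dec (p GA) 0) as [E|E].
    + assert (EB : p GB = 0) by lra. rewrite E, EB, Rmin_left by lra. ring.
    + rewrite Rmin_right by lra. field. exact E.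
  - rewrite Rmin_right by lra. ring.
  - rewrite Rmin_left by lra. ring.
  - rewrite Rmin_left by lra. field. lra.
Qed.

Lemma dyn_AA1 f0 f1 p j : (forall k, 0 <= p k) ->
  dyn f0 f1 (AA1 p) p j = drift (f0 0) (f1 0) (p j) (Rmin (p GA) (p GB)).
Proof.
  intros Hp. unfold dyn. rewrite sel_AA1_qualified by exact Hp.
  replace (sel (AA1 p) p false j) with 0 by (unfold sel, AA1, AA1_wrt; ring).
  reflexivity.
Qed.

Lemma dyn_UN f0 f1 p j : dyn f0 f1 UN p j = drift (f0 0) (f1 0) (p j) (p j).
Proof.
  unfold dyn, sel, UN, pi, drift.
  replace (0 * (1 - p j)) with 0 by ring. now rewrite Rmult_1_l.
Qed.

Lemma inst_util_AA1 gA u0 u1 p : (forall k, 0 <= p k) ->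
  inst_util gA u0 u1 (AA1 p) p = u1 * Rmin (p GA) (p GB).
Proof.
  intros Hp. unfold inst_util, util.
  assert (Hrate : forall j, AA1 p true j * pi p true j = Rmin (p GA) (p GB))
    by (intro j; exact (sel_AA1_qualified p j Hp)).
  rewrite !Rmult_assoc, !Hrate. unfold AA1, AA1_wrt, gfrac. ring.
Qed.

Lemma inst_util_UN gA u0 u1 p :
  inst_util gA u0 u1 UN p = u1 * (gA * p GA + (1 - gA) * p GB).
Proof. unfold inst_util, UN, util, gfrac, pi. ring. Qed.

Lemma AA1_reaches_equality f0 f1 K x : K < 1 ->
  (forall q, 0 <= q <= 1 -> f1 0 q - f0 0 q <= K) ->
  is_traj f0 f1 AA1 x -> reaches_equality x.
Proof.
  intros HK Hgap [Hrange [Hderiv _]].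
  set (D := fun t => x t GA - x t GB).
  set (D' := fun t => dyn f0 f1 (AA1 (x t)) (x t) GA - dyn f0 f1 (AA1 (x t)) (x t) GB).
  assert (Hdecay := exp_decay (fun t => D t * D t) (fun t => D' t * D t + D t * D' t)
    (2 * (1 - K))).
  assert (HD : forall t, 0 < t -> derivable_pt_lim D t (D' t))
    by (intros t Ht; exact (derivable_pt_lim_minus _ _ _ _ _ (Hderiv t GA Ht) (Hderiv t GB Ht))).
  specialize (Hdecay (fun t Ht => derivable_pt_lim_mult _ _ _ _ _ (HD t Ht) (HD t Ht))).
  assert (Hsign : forall t, 0 < t -> D' t * D t + D t * D' t <= - (2 * (1 - K)) * (D t * D t)).
  { intros t Ht.
    assert (Hnn : forall k, 0 <= x t k) by (intro k; apply Hrange; lra).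
    set (m := Rmin (x t GA) (x t GB)).
    assert (Hm : 0 <= m <= 1).
    { split; [apply Rmin_glb; apply Hnn|].
      apply Rle_trans with (x t GA); [apply Rmin_l | apply Hrange; lra]. }
    assert (HD' : D' t = (f1 0 m - f0 0 m - 1) * D t)
      by (unfold D', D; rewrite !dyn_AA1 by exact Hnn; unfold drift; fold m; ring).
    rewrite HD'. pose proof (Hgap m Hm). pose proof (Rle_0_sqr (D t)). unfold Rsqr in *. nra. }
  specialize (Hdecay Hsign).
  intros eps Heps.
  destruct (exp_neg_eventually_lt (2 * (1 - K)) (eps * eps)) as [T HT]; [lra | nra |].
  exists (Rmax 1 (T + 1)). intros t Ht.
  pose proof (Rmax_l 1 (T + 1)). pose proof (Rmax_r 1 (T + 1)).
  assert (HD1 : D 1 * D 1 <= 1)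
    by (unfold D; pose proof (Hrange 1 GA); pose proof (Hrange 1 GB); nra).
  pose proof (Hdecay 1 t ltac:(lra)). pose proof (HT (t - 1) ltac:(lra)).
  pose proof (exp_pos (- (2 * (1 - K)) * (t - 1))).
  rewrite <- (Rabs_pos_eq eps) by lra. apply Rsqr_lt_abs_0. unfold Rsqr. fold (D t). nra.
Qed.

Lemma AA1_min_le_UN f0 f1 xUN xAA j :
  (forall x y m, 0 <= y <= m -> m <= x <= 1 ->
     drift (f0 0) (f1 0) x m <= drift (f0 0) (f1 0) y y) ->
  is_traj f0 f1 (fun _ => UN) xUN -> is_traj f0 f1 AA1 xAA -> xUN 0 = xAA 0 ->
  forall t, 0 <= t -> Rmin (xAA t GA) (xAA t GB) <= xUN t j.
Proof.
  intros Hdrift [HrU [HdU HcU]] [HrA [HdA HcA]] H0.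
  apply (Rmin_le_of_comparison _ _ _ _ _ _ (fun t => HdA t GA) (fun t => HdA t GB)
           (fun t => HdU t j) ); [| exact (HcA GA) | exact (HcA GB) | exact (HcU j) |].
  - intros t Ht HA HB.
    assert (Hnn : forall k, 0 <= xAA t k) by (intro k; apply HrA; lra).
    rewrite !dyn_AA1, dyn_UN by exact Hnn.
    assert (Hm : xUN t j <= Rmin (xAA t GA) (xAA t GB)) by (apply Rmin_glb; lra).
    pose proof (HrU t j ltac:(lra)). pose proof (HrA t GA ltac:(lra)). pose proof (HrA t GB ltac:(lra)).
    split; apply Hdrift; auto; split; try lra; [apply Rmin_l | apply Rmin_r].
  - rewrite H0. destruct j; [apply Rmin_l | apply Rmin_r].
Qed.

Theorem mainTheorem10
  (f0 f1 : R -> R -> R)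
  (Hf0 : C1_2 f0) (Hf1 : C1_2 f1)
  (Hf0r : forall b0 b1, 0 <= b0 <= 1 -> 0 <= b1 <= 1 -> 0 <= f0 b0 b1 <= 1)
  (Hf1r : forall b0 b1, 0 <= b0 <= 1 -> 0 <= b1 <= 1 -> 0 <= f1 b0 b1 <= 1)
  (LUN : R) (HLUN : LUN < 1)
  (Hfder : forall q, 0 <= q <= 1 ->
     exists l, derivable_pt_lim (fun s => s * f1 0 s + (1 - s) * f0 0 s) q l
               /\ Rabs l <= LUN)
  (gA u0 u1 : R) (HgA : 0 <= gA <= 1) (Hu0 : u0 <= 0) (Hu1 : 0 <= u1)
  (Hu : gA * u1 + (1 - gA) * u0 <= 0)
  (p0 : profile) (Hp0 : forall j, 0 <= p0 j <= 1) (Hadv : p0 GB <= p0 GA) :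
  ((exists qm, 0 <= qm <= 1 /\
      (forall q, 0 <= q <= 1 -> Rabs (f1 0 q - f0 0 q) <= Rabs (f1 0 qm - f0 0 qm)) /\
      Rabs (f1 0 qm - f0 0 qm) < 1) /\
   (forall xAA : R -> profile,
      is_traj f0 f1 AA1 xAA -> xAA 0 = p0 -> reaches_equality xAA)) /\
  (forall xUN xAA : R -> profile,
     is_traj f0 f1 (fun _ => UN) xUN -> xUN 0 = p0 ->
     is_traj f0 f1 AA1 xAA -> xAA 0 = p0 ->
     forall t, 0 <= t -> inst_util gA u0 u1 UN (xUN t) >= inst_util gA u0 u1 (AA1 (xAA t)) (xAA t)).
Proof.
  destruct Hf0 as [_ [d0 [_ [Hd0 _]]]]. destruct Hf1 as [_ [d1 [_ [Hd1 _]]]].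
  assert (Hr0 : forall q, 0 <= q <= 1 -> 0 <= f0 0 q <= 1) by (intros; apply Hf0r; lra).
  assert (Hr1 : forall q, 0 <= q <= 1 -> 0 <= f1 0 q <= 1) by (intros; apply Hf1r; lra).
  pose proof (max_abs_sub_lt1 (f0 0) (f1 0) (d0 0) (d1 0) (Hd0 0) (Hd1 0) Hr0 Hr1
                LUN HLUN Hfder) as Hmax.
  split; [split; [exact Hmax|] |].
  - intros xAA HAA _. destruct Hmax as [qm [_ [Hqm Hlt]]].
    apply (AA1_reaches_equality f0 f1 _ xAA Hlt); [|exact HAA].
    intros q Hq. apply Rle_trans with (Rabs (f1 0 q - f0 0 q)); [apply Rle_abs | auto].
  - intros xUN xAA HUN HUN0 HAA HAA0 t Ht.
    pose proof (drift_le_diag (f0 0) (f1 0) (d0 0) (d1 0) (Hd0 0) (Hd1 0) Hr0 Hr1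
                  LUN HLUN Hfder) as Hdrift.
    assert (H0 : xUN 0 = xAA 0) by congruence.
    pose proof (AA1_min_le_UN f0 f1 xUN xAA GA Hdrift HUN HAA H0 t Ht).
    pose proof (AA1_min_le_UN f0 f1 xUN xAA GB Hdrift HUN HAA H0 t Ht).
    rewrite inst_util_UN, inst_util_AA1 by (intro k; apply (proj1 HAA); exact Ht).
    apply Rle_ge, Rmult_le_compat_l; [exact Hu1 | nra].
Qed.
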